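(* Fix a proper norm on $\mathbb Q$. Then $\ell^1(\mathbb Q)\sqsubseteq^{\mathbb Q}\mathbb R$ but $\mathbb R\not\sqsubseteq^{\mathbb Q}\ell^1(\mathbb Q)$, where $\mathbb R$ is regarded as a Polish $\mathbb Q$-vector space with its usual topology.
   Context: A norm on a ring $R$ is a function $|\cdot|\colon R\to[0,\infty)$ such that $(a,b)\mapsto|a-b|$ is a metric and $|rs|\le|r||s|$; it is proper if every closed ball is compact (a proper norm on $\mathbb Q$ induces the discrete topology). $\ell^1(\mathbb Q)=\{(q_k)_{k\in\mathbb N}\in\mathbb Q^{\mathbb N}:\sum_k|q_k|/k!<\infty\}$ with norm $\sum_k|q_k|/k!$. $M\sqsubseteq^{\mathbb Q}N$ means there is a continuous $\mathbb Q$-linear injection $M\to N$. *)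

From Stdlib Require Import Reals List.
From Coquelicot Require Import Coquelicot.
From mathcomp Require Import all_boot all_algebra.
From mathcomp Require Import Rstruct.

Set Implicit Arguments.
Unset Strict Implicit.
Unset Printing Implicit Defensive.
Local Open Scope R_scope.

Definition qadd (a b : rat) : rat := GRing.add a b.
Definition qsub (a b : rat) : rat := GRing.add a (GRing.opp b).
Definition qmul (a b : rat) : rat := GRing.mul a b.
Definition QtoR (q : rat) : R := @ratr R q.

Definition is_ring_norm (N : rat -> R) : Prop :=
  (forall x, (0 <= N x)) /\
  (forall a b, N (qsub a b) = 0 <-> a = b) /\
  (forall a b, N (qsub a b) = N (qsub b a)) /\
  (forall a b c, (N (qsub a c) <= N (qsub a b) + N (qsub b c))) /\
  (forall r s, (N (qmul r s) <= N r * N s)).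

Definition openQ (N : rat -> R) (U : rat -> Prop) : Prop :=
  forall x, U x -> exists e : R, (0 < e) /\ forall y, (N (qsub y x) < e) -> U y.

Definition compactQ (N : rat -> R) (K : rat -> Prop) : Prop :=
  forall (I : Type) (U : I -> rat -> Prop),
    (forall i, openQ N (U i)) ->
    (forall x, K x -> exists i, U i x) ->
    exists l : list I, forall x, K x -> exists i, In i l /\ U i x.

Definition proper_norm (N : rat -> R) : Prop :=
  is_ring_norm N /\
  forall (c : rat) (r : R), compactQ N (fun x => (N (qsub x c) <= r)).

Definition ell1_terms (N : rat -> R) (q : nat -> rat) : nat -> R :=
  fun k => (N (q k) / INR (Factorial.fact k)).

Definition in_ell1 (N : rat -> R) (q : nat -> rat) : Prop :=
  ex_series (ell1_terms N q).

Definition ell1_norm (N : rat -> R) (q : nat -> rat) : R :=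
  Series (ell1_terms N q).

Definition seq_sub (p q : nat -> rat) : nat -> rat := fun k => qsub (p k) (q k).
Definition seq_add (p q : nat -> rat) : nat -> rat := fun k => qadd (p k) (q k).
Definition seq_scale (r : rat) (q : nat -> rat) : nat -> rat := fun k => qmul r (q k).

Definition ell1_embeds_in_R (N : rat -> R) : Prop :=
  exists f : (nat -> rat) -> R,
    (forall p q, in_ell1 N p -> in_ell1 N q -> f (seq_add p q) = (f p + f q)) /\
    (forall r q, in_ell1 N q -> f (seq_scale r q) = (QtoR r * f q)) /\
    (forall p q, in_ell1 N p -> in_ell1 N q -> f p = f q -> p = q) /\
    (forall p, in_ell1 N p -> forall eps : R, (0 < eps) ->
       exists delta : R, (0 < delta) /\
         forall q, in_ell1 N q -> (ell1_norm N (seq_sub q p) < delta) ->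
           (Rabs (f q - f p) < eps)).

Definition R_embeds_in_ell1 (N : rat -> R) : Prop :=
  exists g : R -> (nat -> rat),
    (forall x, in_ell1 N (g x)) /\
    (forall x y, g (x + y) = seq_add (g x) (g y)) /\
    (forall r x, g (QtoR r * x) = seq_scale r (g x)) /\
    (forall x y, g x = g y -> x = y) /\
    (forall x eps, (0 < eps) ->
       exists delta : R, (0 < delta) /\
         forall y, (Rabs (y - x) < delta) ->
           (ell1_norm N (seq_sub (g y) (g x)) < eps)).

(* Everything rests on the discreteness of a proper norm on Q: there is
   c > 0 with N x >= c for x <> 0 (proved by a Cantor nested-ball argument
   against compactness of the unit ball, using an enumeration of Q).  Closed
   balls are then finite, hence have a common denominator and a bound.

   - R does not embed: for a continuous Q-linear g : R -> ell^1, the points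
     g(t) = t g(1), t rational and small, have a nonzero coordinate k of norm
     at least c, hence ell^1 norm at least c / k!, contradicting continuity.
   - ell^1 embeds via emb d = sum_j d_(pi j) / E_j, where pi enumerates each
     index infinitely often and E_j is a rapidly growing divisibility chain
     adapted to the common denominators G_j of the balls of radius j!.
     Linearity is termwise; injectivity holds because a scaled partial sum is
     an integer while the scaled tail is smaller than 1; continuity holds
     because ell^1-close sequences agree on many initial coordinates. *)
From Pilot Require Import Defs.
From Stdlib Require Import Reals Lra Lia Classical ClassicalEpsilon.
From Stdlib Require Import FunctionalExtensionality List Cantor.
From Coquelicot Require Import Coquelicot.
From mathcomp Require Import all_boot all_order all_algebra Rstruct ring.
Import Order.TTheory GRing.Theory Num.Theory.
Set Implicit Arguments.
Unset Strict Implicit.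
Open Scope R_scope.

Lemma qsub_xx (a : rat) : qsub a a = 0%R.
Proof. by rewrite /qsub subrr. Qed.

Lemma qsub_x0 (a : rat) : qsub a 0%R = a.
Proof. by rewrite /qsub oppr0 addr0. Qed.

Lemma qsub_eq0 (a b : rat) : qsub a b = 0%R -> a = b.
Proof. by rewrite /qsub => /eqP; rewrite subr_eq0 => /eqP. Qed.

Section RingNorm.
Variable N : rat -> R.
Hypothesis HN : is_ring_norm N.

Lemma norm_ge0 x : 0 <= N x.
Proof. by case: HN. Qed.

Lemma norm_sub_eq0 a b : N (qsub a b) = 0 <-> a = b.
Proof. by case: HN => _ []. Qed.

Lemma norm_sym a b : N (qsub a b) = N (qsub b a).
Proof. by case: HN => _ [_ []]. Qed.

Lemma norm_triangle a b c : N (qsub a c) <= N (qsub a b) + N (qsub b c).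
Proof. by case: HN => _ [_ [_ []]]. Qed.

Lemma norm0 : N 0%R = 0.
Proof. by rewrite -(qsub_xx 0) norm_sub_eq0. Qed.

Lemma norm_sub_pos a b : a <> b -> 0 < N (qsub a b).
Proof.
move=> hab; case: (Rle_lt_or_eq_dec _ _ (norm_ge0 (qsub a b))) => // h.
by case: hab; apply/norm_sub_eq0.
Qed.

Lemma norm_sub_le a b : N (qsub a b) <= N a + N b.
Proof.
have := norm_triangle a 0%R b.
by rewrite qsub_x0 (norm_sym 0%R b) qsub_x0.
Qed.

Lemma outside_ball_open c r : openQ N (fun y => r < N (qsub y c)).
Proof.
move=> x hx; exists (N (qsub x c) - r); split; first lra.
move=> y hy; have := norm_triangle x y c; rewrite (norm_sym x y); lra.
Qed.

End RingNorm.

Section Discreteness.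
Variable N : rat -> R.
Hypothesis HN : is_ring_norm N.

Lemma nested_balls (c : nat -> rat) (r : nat -> R) :
  (forall n y, N (qsub y (c n.+1)) <= r n.+1 -> N (qsub y (c n)) <= r n) ->
  forall m n y, (n <= m)%coq_nat -> N (qsub y (c m)) <= r m -> N (qsub y (c n)) <= r n.
Proof.
move=> hnest; elim=> [|m IH] n y hnm hy; first by have -> : n = 0%nat by lia.
case: (Nat.eq_dec n m.+1) => [-> //|hne].
by apply: (IH n y); [lia | apply: hnest].
Qed.

Lemma escaping_balls_not_compact (c : nat -> rat) (r : nat -> R) :
  (forall n, 0 <= r n) ->
  (forall n y, N (qsub y (c n.+1)) <= r n.+1 -> N (qsub y (c n)) <= r n) ->
  (forall x, exists n, r n < N (qsub x (c n))) ->
  ~ compactQ N (fun x => N (qsub x (c 0%nat)) <= r 0%nat).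
Proof.
move=> hr hnest hesc hK.
have [|l hl] := hK nat (fun n y => r n < N (qsub y (c n))) _ (fun x _ => hesc x).
  by move=> n; apply: outside_ball_open.
pose M := (fold_right Nat.max 0%nat l).+1.
have hM : N (qsub (c M) (c M)) <= r M by rewrite qsub_xx (norm0 HN).
have [i [hi hout]] := hl (c M) (nested_balls hnest (Nat.le_0_l M) hM).
have hiM : (i <= M)%coq_nat.
  suff : (i <= fold_right Nat.max 0%nat l)%coq_nat by rewrite /M; lia.
  elim: (l) hi => [|a l' IHl] //= [->|/IHl]; lia.
have := nested_balls hnest hiM hM; lra.
Qed.

Lemma shrink_ball_avoiding (c b x : rat) (r : R) :
  0 < r -> x <> 0%R -> N x < r / 2 ->
  exists c' r', 0 < r' /\ r' < N (qsub b c') /\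
    forall y, N (qsub y c') <= r' -> N (qsub y c) <= r.
Proof.
move=> hr hx hNx.
pose c' := if b == c then (c + x)%R else c.
have hc'c : N (qsub c' c) < r / 2.
  rewrite /c'; case: (b == c); first by rewrite /qsub addrAC subrr add0r.
  rewrite qsub_xx (norm0 HN); lra.
have hbc' : b <> c'.
  rewrite /c'; case: eqP => [-> /eqP|//].
  by rewrite -subr_eq0 opprD addrA subrr add0r oppr_eq0 => /eqP.
have hpos := norm_sub_pos HN hbc'.
exists c', (Rmin (N (qsub b c')) (r / 2) / 2).
have := Rmin_l (N (qsub b c')) (r / 2); have := Rmin_r (N (qsub b c')) (r / 2).
have : 0 < Rmin (N (qsub b c')) (r / 2) by apply: Rmin_case; lra.
move=> h0 h1 h2; split; [lra | split; first lra].
move=> y hy; have := norm_triangle HN y c' c; lra.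
Qed.

(* Otherwise, enumerating
   Q as (b_n), one builds nested closed balls inside the compact unit ball,
   the n-th one avoiding b_n. *)
Lemma compact_ball_discrete : compactQ N (fun x => N (qsub x 0%R) <= 1) ->
  exists c, 0 < c /\ forall x, x <> 0%R -> c <= N x.
Proof.
move=> hK; apply: NNPP => hnot.
have small r : 0 < r -> exists x, x <> 0%R /\ N x < r.
  move=> hr; apply: NNPP => h; apply: hnot; exists r; split => // x hx.
  by apply: Rnot_lt_le => hlt; apply: h; exists x.
have step (p : rat * R) (b : rat) : exists p' : rat * R, 0 < p.2 ->
    0 < p'.2 /\ p'.2 < N (qsub b p'.1) /\
    forall y, N (qsub y p'.1) <= p'.2 -> N (qsub y p.1) <= p.2.
  case: (Rlt_dec 0 p.2) => hr; last by exists p.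
  have [x [hx hNx]] := small (p.2 / 2) ltac:(lra).
  have [c' [r' hc']] := shrink_ball_avoiding p.1 b hr hx hNx.
  by exists (c', r').
pose next p b := proj1_sig (constructive_indefinite_description _ (step p b)).
have nextP p b : 0 < p.2 -> 0 < (next p b).2 /\ (next p b).2 < N (qsub b (next p b).1) /\
    forall y, N (qsub y (next p b).1) <= (next p b).2 -> N (qsub y p.1) <= p.2.
  exact: proj2_sig (constructive_indefinite_description _ (step p b)).
pose enum n : rat := odflt 0%R (unpickle n).
pose s := fix s (n : nat) : rat * R :=
  if n is n'.+1 then next (s n') (enum n') else (0%R, 1).
have s_pos n : 0 < (s n).2.
  by elim: n => [|n IH] /=; [lra | case: (nextP (s n) (enum n) IH)].
apply: (@escaping_balls_not_compact (fun n => (s n).1) (fun n => (s n).2) _ _ _ hK).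
- by move=> n; apply: Rlt_le.
- by move=> n y; case: (nextP (s n) (enum n) (s_pos n)) => _ [_]; apply.
- move=> x; exists (pickle x).+1.
  change (s (pickle x).+1) with (next (s (pickle x)) (enum (pickle x))).
  rewrite /enum pickleK /=.
  by case: (nextP (s (pickle x)) x (s_pos _)) => _ [].
Qed.

End Discreteness.

Lemma rat_abs_le_numq (y : rat) : (`|y| <= (`|numq y|%N)%:R)%R.
Proof.
have hd : (1 <= (denq y)%:~R :> rat)%R by rewrite ler1z; have := denq_gt0 y.
have -> : ((`|numq y|%N)%:R : rat) = `|(numq y)%:~R|%R by rewrite -[RHS]intr_norm -abszE.
rewrite numqE normrM (ger0_norm (le_trans ler01 hd)).
by rewrite -{1}(mulr1 `|y|%R); apply: ler_wpM2l.
Qed.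

Lemma common_denominator (l : list rat) : exists M : nat, (0 < M)%N /\
  forall x, In x l -> (M%:R * x)%R \is a Num.int /\ (`|x| <= M%:R)%R.
Proof.
elim: l => [|y l [M [hM IH]]]; first by exists 1%N.
set dy := `|denq y|%N; set ny := `|numq y|%N.
have hdy : (0 < dy)%N by rewrite absz_gt0 denq_neq0.
exists (M * dy * ny.+1)%N; split; first by rewrite !muln_gt0 hM hdy.
move=> x [<-|hx].
- split.
  + have -> : ((M * dy * ny.+1)%:R * y = (M * ny.+1)%:R * (y * (denq y)%:~R))%R.
      by rewrite !natrM /dy natr_absz gtr0_norm ?denq_gt0 //; ring.
    by rewrite -numqE rpredM ?natr_int ?intr_int.
  + apply: (le_trans (rat_abs_le_numq y)); rewrite ler_nat -/ny.
    by apply: (leq_trans (leqnSn ny)); apply: leq_pmull; rewrite muln_gt0 hM hdy.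
- have [hint hle] := IH x hx; split.
  + have -> : ((M * dy * ny.+1)%:R * x = (dy * ny.+1)%:R * (M%:R * x))%R.
      by rewrite !natrM; ring.
    by rewrite rpredM ?natr_int.
  + apply: (le_trans hle); rewrite ler_nat -mulnA.
    by apply: leq_pmulr; rewrite muln_gt0 hdy.
Qed.

Lemma ell1_term_le1 (N : rat -> R) q k :
  ell1_terms N q k <= 1 -> N (q k) <= INR (Factorial.fact k).
Proof.
move=> h; have hf := INR_fact_lt_0 k.
have -> : N (q k) = ell1_terms N q k * INR (Factorial.fact k).
  by rewrite /ell1_terms /Rdiv Rmult_assoc Rinv_l ?Rmult_1_r //; lra.
by rewrite -{2}(Rmult_1_l (INR _)); apply: Rmult_le_compat_r; lra.
Qed.

Section Ell1.
Variable N : rat -> R.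
Hypothesis HN : is_ring_norm N.

Lemma ell1_terms_ge0 q k : 0 <= ell1_terms N q k.
Proof. by apply: Rdiv_le_0_compat; [apply: norm_ge0 | apply: INR_fact_lt_0]. Qed.

Lemma ell1_term_le_norm q k : in_ell1 N q -> ell1_terms N q k <= ell1_norm N q.
Proof.
move=> hq; rewrite /ell1_norm (Series_incr_n _ k.+1 (Nat.lt_0_succ k) hq) /=.
have htail : 0 <= Series (fun n => ell1_terms N q (k.+1 + n)%coq_nat).
  set t := fun n => _.
  have := Series_le (fun n => 0 * t n) t; rewrite Series_scal_l Rmult_0_l; apply.
  - by move=> n; rewrite Rmult_0_l; split; [lra | apply: ell1_terms_ge0].
  - exact: proj1 (ex_series_incr_n _ k.+1) hq.
case: k {hq htail} (htail) => [|k] /=; first lra.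
by have := cond_pos_sum _ k (ell1_terms_ge0 q); lra.
Qed.

Lemma ell1_norm_ge_coord c q k : (forall x, x <> 0%R -> c <= N x) -> in_ell1 N q ->
  q k <> 0%R -> c / INR (Factorial.fact k) <= ell1_norm N q.
Proof.
move=> hc hq /hc hqk; apply: Rle_trans (ell1_term_le_norm k hq).
by apply: Rmult_le_compat_r => //; apply/Rlt_le/Rinv_0_lt_compat/INR_fact_lt_0.
Qed.

Lemma ell1_eventually_small q : in_ell1 N q ->
  exists K0, forall k, (K0 <= k)%coq_nat -> N (q k) <= INR (Factorial.fact k).
Proof.
move=> /ex_series_lim_0 /is_lim_seq_spec /(_ (mkposreal 1 Rlt_0_1)) [K0 hK].
exists K0 => k /hK; rewrite Rminus_0_r /= => h.
by apply: (ell1_term_le1 (N := N)); have := Rle_abs (ell1_terms N q k); lra.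
Qed.

Lemma ell1_sub p q : in_ell1 N p -> in_ell1 N q -> in_ell1 N (Defs.seq_sub p q).
Proof.
move=> hp hq; apply: (ex_series_le _ _ _ (ex_series_plus _ _ hp hq)) => k.
rewrite /norm /= /abs /= Rabs_pos_eq; last exact: ell1_terms_ge0.
rewrite /ell1_terms /Defs.seq_sub /Rdiv /plus /= -Rmult_plus_distr_r.
apply: Rmult_le_compat_r; last exact: norm_sub_le.
by apply/Rlt_le/Rinv_0_lt_compat/INR_fact_lt_0.
Qed.

End Ell1.

Lemma QtoR_le (x y : rat) : (x <= y)%R -> QtoR x <= QtoR y.
Proof. by move=> h; apply/RleP; rewrite /QtoR ler_rat. Qed.

Lemma QtoR_abs (x : rat) : Rabs (QtoR x) = QtoR `|x|%R.
Proof. by rewrite /QtoR RabsE ratr_norm. Qed.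

Lemma QtoR_nat n : QtoR (n%:R)%R = INR n.
Proof. by rewrite /QtoR ratr_nat INRE. Qed.

Lemma QtoR_add x y : QtoR (x + y)%R = QtoR x + QtoR y.
Proof. by rewrite /QtoR rmorphD RplusE. Qed.

Lemma QtoR_mul x y : QtoR (x * y)%R = QtoR x * QtoR y.
Proof. by rewrite /QtoR rmorphM RmultE. Qed.

Lemma QtoR_opp x : QtoR (- x)%R = - QtoR x.
Proof. by rewrite /QtoR rmorphN RoppE. Qed.

Lemma QtoR_divn x n : QtoR (x / n%:R)%R = QtoR x / INR n.
Proof. by rewrite QtoR_mul /QtoR fmorphV rmorph_nat -INRE -RinvE. Qed.

Lemma QtoR_int0 (z : rat) : z \is a Num.int -> Rabs (QtoR z) < 1 -> z = 0%R.
Proof.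
move=> hz h; apply/eqP/negP => hn.
have := QtoR_le (norm_intr_ge1 hz (introT negP hn)).
have -> : QtoR 1 = 1 by rewrite /QtoR rmorph1.
by rewrite -QtoR_abs; lra.
Qed.


(* The denominators E_j of the embedding: a divisibility chain growing fast
   enough relative to a given positive sequence G. *)
Fixpoint denom_chain (G : nat -> nat) (j : nat) : nat :=
  match j with
  | O => G O
  | S i => (denom_chain G i * denom_chain G i * G i.+1 * 4 ^ i.+1 * i.+2)%N
  end.

Section DenomChain.
Variable G : nat -> nat.
Hypothesis G_pos : forall j, (0 < G j)%N.
Local Notation E := (denom_chain G).

Lemma denom_chain_pos j : (0 < E j)%N.
Proof. by elim: j => [|j IH] /=; rewrite ?G_pos // !muln_gt0 IH G_pos expn_gt0. Qed.

Lemma denom_chain_dvd i j : (i <= j)%N -> (E i %| E j)%N.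
Proof.
elim: j => [|j IH]; first by rewrite leqn0 => /eqP ->.
rewrite leq_eqVlt => /orP [/eqP -> //|]; rewrite ltnS => /IH hij.
by apply: (dvdn_trans hij) => /=; rewrite -!mulnA dvdn_mulr.
Qed.

Lemma denom_chain_mono i j : (i <= j)%N -> (E i <= E j)%N.
Proof. by move=> h; apply: dvdn_leq; [exact: denom_chain_pos | exact: denom_chain_dvd]. Qed.

(* E_j dominates G_j 4^j: this makes the series of the embedding converge. *)
Lemma denom_chain_geom j : (G j * 4 ^ j <= E j)%N.
Proof.
case: j => [|j] /=; first by rewrite expn0 muln1.
rewrite -!mulnA mulnA; apply: (leq_trans _ (leq_pmull _ _)); last first.
  by rewrite muln_gt0 !denom_chain_pos.
by rewrite mulnA; apply: leq_pmulr.
Qed.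

(* E_j swamps every earlier E_J G_J: this makes the tails of the series tiny
   compared with 1 / E_J, which yields injectivity. *)
Lemma denom_chain_tail J j : (J < j)%N ->
  (E J * G J * G j * 4 ^ j * j.+1 <= E j)%N.
Proof.
case: j => [//|j]; rewrite ltnS => hJ /=.
rewrite -!mulnA; apply: leq_mul; first exact: denom_chain_mono.
rewrite !mulnA; do 3 apply: leq_mul => //.
apply: (leq_trans _ (denom_chain_mono hJ)); apply: (leq_trans _ (denom_chain_geom J)).
by rewrite leq_pmulr // expn_gt0.
Qed.

End DenomChain.

(* A surjection nat -> nat with pi j <= j that hits every value infinitely
   often (first component of the Cantor pairing). *)
Definition pi (j : nat) : nat := fst (Cantor.of_nat j).

Lemma pi_le j : (pi j <= j)%coq_nat.
Proof.
rewrite /pi -{2}(Cantor.cancel_to_of j); case: (Cantor.of_nat j) => x y.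
by have := Cantor.to_nat_non_decreasing x y; simpl fst; lia.
Qed.

Lemma pi_hit k J : exists j, (J < j)%coq_nat /\ pi j = k.
Proof.
exists (Cantor.to_nat (k, J.+1)); rewrite /pi Cantor.cancel_of_to; split => //.
by have := Cantor.to_nat_non_decreasing k J.+1; lia.
Qed.

Lemma geom_bound (a : nat -> R) C : (forall j, Rabs (a j) <= C * (/2)^j) ->
  ex_series a /\ Rabs (Series a) <= 2 * C.
Proof.
move=> h.
have hg : is_series (fun j => C * (/2)^j) (C * / (1 - /2)).
  by apply: is_series_scal_l; apply: is_series_geom; rewrite Rabs_pos_eq; lra.
have hb : ex_series (fun j => C * (/2)^j) by eexists; exact hg.
have ha : ex_series (fun j => Rabs (a j)).
  by apply: (ex_series_le _ _ _ hb) => n; rewrite /norm /= /abs /= Rabs_Rabsolu.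
split; first exact: ex_series_Rabs.
apply: (Rle_trans _ _ _ (Series_Rabs _ ha)).
have := Series_le _ _ (fun n => conj (Rabs_pos (a n)) (h n)) hb.
rewrite (is_series_unique _ _ hg) (_ : / (1 - /2) = 2); lra.
Qed.

Lemma INR_muln a b : INR (a * b)%N = INR a * INR b.
Proof. by rewrite !INRE natrM RmultE. Qed.

Lemma INR_4pow j : INR (4 ^ j)%N = 4 ^ j.
Proof. elim: j => [|j IH] //; rewrite expnS INR_muln IH /=; lra. Qed.

Lemma ratio_le a m e : (a * m <= e)%N -> (0 < m)%N -> (0 < e)%N ->
  INR a / INR e <= / INR m.
Proof.
move=> h /ssrnat.ltP/lt_0_INR hm /ssrnat.ltP/lt_0_INR he.
have := le_INR _ _ (ssrnat.leP h); rewrite INR_muln => h1.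
apply: (Rmult_le_reg_r (INR e * INR m)); first nra.
rewrite /Rdiv.
have -> : INR a * / INR e * (INR e * INR m) = INR a * INR m * (INR e * / INR e) by ring_simplify.
have -> : / INR m * (INR e * INR m) = INR e * (INR m * / INR m) by ring_simplify.
by rewrite !Rinv_r; lra.
Qed.

Lemma sum_QtoR (f : nat -> rat) J :
  sum_f_R0 (fun j => QtoR (f j)) J = QtoR (\sum_(0 <= j < J.+1) f j)%R.
Proof.
elim: J => [|J IH]; first by rewrite big_nat1.
by rewrite big_nat_recr //= QtoR_add -IH.
Qed.

Lemma inv_pow_le (x : R) K j : 1 <= x -> (K <= j)%coq_nat -> (/ x) ^ j <= (/ x) ^ K.
Proof.
move=> hx hKj; rewrite !pow_inv; apply: Rinv_le_contravar; last exact: Rle_pow.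
by apply: pow_lt; lra.
Qed.

Section ProperNorm.
Variable N : rat -> R.
Hypothesis HP : proper_norm N.
Let HN : is_ring_norm N := proj1 HP.

Lemma discrete : exists c, 0 < c /\ forall x, x <> 0%R -> c <= N x.
Proof. exact: compact_ball_discrete HN (proj2 HP 0%R 1). Qed.

(* Closed balls are finite: they are compact and, the norm being discrete,
   covered by singletons. *)
Lemma ball_finite (r : R) : exists l : list rat, forall x, N x <= r -> In x l.
Proof.
have [c [hc hd]] := discrete.
case: (proj2 HP 0%R r rat (fun i y => y = i)).
- move=> i x ->; exists c; split => // y hy; apply: NNPP => hne.
  suff : c <= N (qsub y i) by lra.
  by apply: hd => /qsub_eq0.
- by move=> x _; exists x.
- by move=> l hl; exists l => x; rewrite -{1}(qsub_x0 x) => /hl [i [hi ->]].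
Qed.

Lemma ball_bound (r : R) : exists M : nat, (0 < M)%N /\
  forall x, N x <= r -> (M%:R * x)%R \is a Num.int /\ (`|x| <= M%:R)%R.
Proof.
have [l hl] := ball_finite r; have [M [hM h]] := common_denominator l.
by exists M; split => // x /hl /h.
Qed.

Definition ball_scale (r : R) : nat :=
  proj1_sig (constructive_indefinite_description _ (ball_bound r)).

Lemma ball_scaleP r : (0 < ball_scale r)%N /\
  forall x, N x <= r -> ((ball_scale r)%:R * x)%R \is a Num.int /\
                        (`|x| <= (ball_scale r)%:R)%R.
Proof. exact: proj2_sig (constructive_indefinite_description _ (ball_bound r)). Qed.

(* R does not embed into ell^1(Q): the image of a line t |-> t g(1) contains
   points arbitrarily close to 0 in R whose nonzero coordinate k has norm at
   least the discreteness constant c, hence ell^1 norm at least c / k!. *)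
Lemma not_R_embeds : ~ R_embeds_in_ell1 N.
Proof.
have [c [hc hd]] := discrete.
move=> [g [gl1 [_ [gscal [ginj gcont]]]]].
have g0 : g 0 = fun _ => 0%R.
  have := gscal 0%R 0; rewrite Rmult_0_r => ->.
  by apply: functional_extensionality => k; rewrite /seq_scale /qmul mul0r.
have [k hk] : exists k, g 1 k <> 0%R.
  apply: NNPP => h; have : g 1 = g 0.
    by rewrite g0; apply: functional_extensionality => k; apply: NNPP => ?; apply: h; exists k.
  by move/ginj; lra.
have hck : 0 < c / INR (Factorial.fact k) by apply/Rdiv_lt_0_compat/INR_fact_lt_0.
have [delta [hdelta hcont]] := gcont 0 _ hck.
have [n [hn hn0]] := archimed_cor1 delta hdelta.
set r : rat := (n%:R^-1)%R.
have hr : QtoR r * 1 = / INR n by rewrite Rmult_1_r /QtoR fmorphV rmorph_nat RinvE INRE.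
have hnpos : 0 < / INR n by apply/Rinv_0_lt_compat/lt_0_INR.
have := hcont (QtoR r * 1) ltac:(by rewrite hr Rminus_0_r Rabs_pos_eq; lra).
rewrite gscal g0.
have -> : Defs.seq_sub (seq_scale r (g 1)) (fun _ => 0%R) = seq_scale r (g 1).
  by apply: functional_extensionality => j; rewrite /Defs.seq_sub qsub_x0.
have hrk : seq_scale r (g 1) k <> 0%R.
  rewrite /seq_scale /qmul => /eqP; rewrite mulf_eq0 invr_eq0 pnatr_eq0.
  by case/orP => /eqP h; [lia | exact: hk h].
have hin : in_ell1 N (seq_scale r (g 1)) by rewrite -gscal.
have := ell1_norm_ge_coord HN hd hin hrk; lra.
Qed.

Definition G (j : nat) : nat := ball_scale (INR (Factorial.fact j)).

Lemma G_pos j : (0 < G j)%N.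
Proof. exact: (ball_scaleP _).1. Qed.

Lemma G_spec j x : N x <= INR (Factorial.fact j) ->
  ((G j)%:R * x)%R \is a Num.int /\ (`|x| <= (G j)%:R)%R.
Proof. exact: (ball_scaleP _).2. Qed.

Definition E : nat -> nat := denom_chain G.

Lemma E_pos j : (0 < E j)%N.
Proof. exact: (denom_chain_pos G_pos j). Qed.

Definition emb_term (d : nat -> rat) (j : nat) : rat := (d (pi j) / (E j)%:R)%R.

Definition emb (d : nat -> rat) : R := Series (fun j => QtoR (emb_term d j)).

Definition controlled (M : nat) (d : nat -> rat) : Prop :=
  forall j k, (k <= j)%coq_nat ->
    ((M * G j)%:R * d k)%R \is a Num.int /\ (`|d k| <= (M * G j)%:R)%R.

Lemma fact_le_INR k j : (k <= j)%coq_nat -> INR (Factorial.fact k) <= INR (Factorial.fact j).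
Proof. by move=> h; apply/le_INR/Factorial.fact_le. Qed.


Lemma small_controlled d : (forall k, N (d k) <= INR (Factorial.fact k)) -> controlled 1 d.
Proof.
by move=> hd j k hkj; rewrite mul1n; apply: G_spec; apply: Rle_trans (hd k) (fact_le_INR hkj).
Qed.

(* Every element of ell^1 is controlled: finitely many initial coordinates
   are handled by a common denominator, the others lie in the balls of radius k!. *)
Lemma ell1_controlled d : in_ell1 N d -> exists M, (0 < M)%N /\ controlled M d.
Proof.
move=> /(ell1_eventually_small (N := N)) [K0 hK].
have [M [hM hl]] := common_denominator (List.map d (List.seq 0 K0)).
exists M; split => // j k hkj.
case: (Nat.lt_ge_cases k K0) => hk.
- have [hint hle] : ((M%:R * d k)%R \is a Num.int) /\ (`|d k| <= M%:R)%R.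
    by apply: hl; apply: in_map; apply/in_seq; lia.
  split; first by rewrite natrM mulrAC rpredM ?natr_int.
  by apply: (le_trans hle); rewrite ler_nat leq_pmulr ?G_pos.
- have [hint hle] := G_spec (Rle_trans _ _ _ (hK k hk) (fact_le_INR hkj)).
  split; first by rewrite natrM -mulrA rpredM ?natr_int.
  by apply: (le_trans hle); rewrite ler_nat leq_pmull.
Qed.

Lemma emb_term_bound M d j a m : controlled M d -> (a * G j * m <= E j)%N -> (0 < m)%N ->
  INR a * Rabs (QtoR (emb_term d j)) <= INR M / INR m.
Proof.
move=> hd hle hm.
have hE : 0 < INR (E j) by apply/lt_0_INR/ssrnat.ltP/E_pos.
have hdj : Rabs (QtoR (d (pi j))) <= INR (M * G j).
  by rewrite QtoR_abs -QtoR_nat; apply: QtoR_le; apply: (hd _ _ (pi_le j)).2.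
have := ratio_le hle hm (E_pos j); rewrite INR_muln => hr.
rewrite /emb_term QtoR_divn /Rdiv Rabs_mult Rabs_inv (Rabs_pos_eq (INR (E j))); last lra.
apply: (Rle_trans _ (INR M * (INR a * INR (G j) * / INR (E j)))).
  rewrite INR_muln in hdj.
  have hpos : 0 <= INR a * / INR (E j).
    by apply: Rmult_le_pos; [apply: pos_INR | apply/Rlt_le/Rinv_0_lt_compat].
  have := Rmult_le_compat_l _ _ _ hpos hdj; nra.
by apply: Rmult_le_compat_l; [apply: pos_INR | rewrite /Rdiv in hr].
Qed.

Lemma emb_term_geom M d j : controlled M d -> Rabs (QtoR (emb_term d j)) <= INR M * (/ 4) ^ j.
Proof.
move=> hd; have hm : (0 < 4 ^ j)%N by rewrite expn_gt0.
have hle : (1 * G j * 4 ^ j <= E j)%N by rewrite mul1n; exact: denom_chain_geom G_pos j.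
have := emb_term_bound hd hle hm.
by rewrite /= Rmult_1_l INR_4pow pow_inv.
Qed.

Lemma emb_ex d : in_ell1 N d -> ex_series (fun j => QtoR (emb_term d j)).
Proof.
move=> /ell1_controlled [M [_ hd]]; apply: (proj1 (geom_bound (C := INR M) _)) => j.
apply: (Rle_trans _ _ _ (emb_term_geom j hd)); apply: Rmult_le_compat_l; first exact: pos_INR.
by apply: pow_incr; lra.
Qed.

Lemma emb_add p q : in_ell1 N p -> in_ell1 N q -> emb (seq_add p q) = emb p + emb q.
Proof.
move=> hp hq; rewrite /emb -Series_plus; try exact: emb_ex.
by apply: Series_ext => j; rewrite /emb_term /seq_add /qadd mulrDl QtoR_add.
Qed.

Lemma emb_sub p q : in_ell1 N p -> in_ell1 N q ->
  emb (Defs.seq_sub p q) = emb p - emb q.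
Proof.
move=> hp hq; rewrite /emb -Series_minus; try exact: emb_ex.
by apply: Series_ext => j; rewrite /emb_term /Defs.seq_sub /qsub mulrDl QtoR_add mulNr QtoR_opp.
Qed.

Lemma emb_scale r q : emb (seq_scale r q) = QtoR r * emb q.
Proof.
rewrite /emb -Series_scal_l.
by apply: Series_ext => j; rewrite /emb_term /seq_scale /qmul -mulrA QtoR_mul.
Qed.

(* Since E_j divides E_J for j <= J, the partial sums of the embedding have
   denominator dividing M G_J E_J. *)
Lemma partial_sum_integral M d J : controlled M d ->
  (((M * G J * E J)%N)%:R * \sum_(0 <= j < J.+1) emb_term d j)%R \is a Num.int.
Proof.
move=> hd; rewrite big_mkord mulr_sumr; apply: rpred_sum => -[j hj] _ /=.
have hjJ : (j <= J)%N by rewrite -ltnS.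
have hE : ((E j)%:R : rat)%R != 0%R by rewrite pnatr_eq0 -lt0n E_pos.
rewrite /emb_term /E -(divnK (denom_chain_dvd G hjJ)) !natrM -/(E j).
set q := ((denom_chain G J %/ E j)%:R : rat)%R.
have -> : (M%:R * (G J)%:R * (q * (E j)%:R) * (d (pi j) / (E j)%:R) =
    ((M * G J)%:R * d (pi j)) * q :> rat)%R by rewrite natrM; field.
apply: rpredM; last exact: natr_int.
by apply: (hd _ _ _).1; have := pi_le j; move/ssrnat.leP: hjJ; lia.
Qed.

Lemma tail_bound M d J : controlled M d ->
  Rabs (INR (M * G J * E J) * Series (fun n => QtoR (emb_term d (J.+1 + n)%coq_nat)))
    <= 2 * (INR (M * M) / INR J.+1).
Proof.
move=> hd; rewrite -Series_scal_l; apply: (proj2 (geom_bound _)) => n.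
set j := (J.+1 + n)%coq_nat.
have hJj : (J < j)%N by apply/ssrnat.ltP; rewrite /j; lia.
have hm : (0 < 4 ^ j * j.+1)%N by rewrite muln_gt0 expn_gt0.
have hle : (E J * G J * G j * (4 ^ j * j.+1) <= E j)%N.
  by rewrite !mulnA; exact: denom_chain_tail G_pos J j hJj.
have hq := emb_term_bound hd hle hm.
have hdecay : / INR (4 ^ j * j.+1) <= / INR J.+1 * (/ 2) ^ n.
  rewrite INR_muln INR_4pow pow_inv -Rinv_mult.
  have h2n : 0 < 2 ^ n by apply: pow_lt; lra.
  have h4 : 2 ^ n <= 4 ^ j.
    by apply: (Rle_trans _ (4 ^ n)); [apply: pow_incr | apply: Rle_pow; rewrite /j]; lra || lia.
  have hJ : INR J.+1 <= INR j.+1 by apply: le_INR; rewrite /j; lia.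
  have hJ0 : 0 < INR J.+1 by apply: lt_0_INR; lia.
  apply: Rinv_le_contravar; first exact: Rmult_lt_0_compat.
  by rewrite Rmult_comm; apply: Rmult_le_compat; lra.
have hM := pos_INR M.
rewrite Rabs_mult Rabs_pos_eq; last exact: pos_INR.
have -> : (M * G J * E J = M * (E J * G J))%N by rewrite [(E J * G J)%N]mulnC mulnA.
rewrite (INR_muln M (E J * G J)) (INR_muln M M) /Rdiv !Rmult_assoc.
apply: Rmult_le_compat_l => //; apply: (Rle_trans _ _ _ hq).
by rewrite /Rdiv; apply: Rmult_le_compat_l.
Qed.

(* If emb d = 0, the partial sums eventually vanish: scaled by M G_J E_J they
   are integers, and they equal minus a tail which is smaller than 1. *)
Lemma emb_kernel_partial_sums d : in_ell1 N d -> emb d = 0 ->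
  exists J0, forall J, (J0 <= J)%coq_nat -> (\sum_(0 <= j < J.+1) emb_term d j)%R = 0%R.
Proof.
move=> hdl h0; have [M [hM hd]] := ell1_controlled hdl.
exists (2 * M * M)%N => J hJ.
have hsplit := Series_incr_n _ J.+1 (Nat.lt_0_succ J) (emb_ex hdl).
change (Init.Nat.pred J.+1) with J in hsplit; rewrite sum_QtoR in hsplit.
have htail := tail_bound J hd.
set T := Series (fun n => QtoR (emb_term d (J.+1 + n)%coq_nat)) in hsplit htail.
have hJ1 : 0 < INR J.+1 by apply: lt_0_INR; lia.
have hsmall : 2 * (INR (M * M) / INR J.+1) < 1.
  have : INR (2 * (M * M)) < INR J.+1 by apply: lt_INR; lia.
  rewrite INR_muln (_ : INR 2 = 2) // => h.
  by apply: (Rmult_lt_reg_r (INR J.+1)) => //; field_simplify; lra.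
have hMJ : (0 < M * G J * E J)%N by rewrite !muln_gt0 hM G_pos E_pos.
have /QtoR_int0 hz := partial_sum_integral J hd.
move: hz; rewrite QtoR_mul QtoR_nat.
have -> : QtoR (\sum_(0 <= j < J.+1) emb_term d j)%R = - T by rewrite /emb in h0; lra.
rewrite Ropp_mult_distr_r_reverse Rabs_Ropp => hz.
move/eqP: (hz ltac:(lra)); rewrite mulf_eq0 pnatr_eq0 eqn0Ngt hMJ /=.
by move/eqP.
Qed.

(* The embedding is injective on ell^1: the difference of consecutive partial
   sums is a single term d_(pi j) / E_j, and pi hits every k arbitrarily late. *)
Lemma emb_kernel d : in_ell1 N d -> emb d = 0 -> forall k, d k = 0%R.
Proof.
move=> hdl h0 k; have [J0 hJ0] := emb_kernel_partial_sums hdl h0.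
have [[|j] [hj hpi]] := pi_hit k J0; first lia.
have := hJ0 j.+1 ltac:(lia); rewrite big_nat_recr //= hJ0; last lia.
rewrite add0r /emb_term hpi => /eqP; rewrite mulf_eq0 invr_eq0 pnatr_eq0 eqn0Ngt E_pos orbF.
by move/eqP.
Qed.

(* An ell^1-small sequence vanishes on its first K coordinates (the norm is
   discrete) and satisfies N (d k) <= k! everywhere. *)
Lemma ell1_small_shape K : exists delta, 0 < delta /\ forall d, in_ell1 N d ->
  ell1_norm N d < delta ->
  (forall k, (k <= K)%coq_nat -> d k = 0%R) /\ (forall k, N (d k) <= INR (Factorial.fact k)).
Proof.
have [c [hc hdisc]] := discrete.
have hK := INR_fact_lt_0 K.
exists (Rmin 1 (c / INR (Factorial.fact K))); split.
  by apply: Rmin_case; [lra | apply: Rdiv_lt_0_compat].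
move=> d hd hn.
have hmin1 := Rmin_l 1 (c / INR (Factorial.fact K)).
have hmin2 := Rmin_r 1 (c / INR (Factorial.fact K)).
split => k.
- move=> hkK; apply: NNPP => /(ell1_norm_ge_coord HN hdisc hd) hge.
  have : c / INR (Factorial.fact K) <= c / INR (Factorial.fact k).
    apply: Rmult_le_compat_l; first lra.
    by apply: Rinv_le_contravar; [apply: INR_fact_lt_0 | apply: fact_le_INR].
  lra.
- by apply: (ell1_term_le1 (N := N)); have := ell1_term_le_norm HN k hd; lra.
Qed.

(* Such a sequence has an image of size at most 2 (1/2)^K: only the terms with
   pi j > K, hence j > K, survive. *)
Lemma emb_small K d : (forall k, (k <= K)%coq_nat -> d k = 0%R) ->
  (forall k, N (d k) <= INR (Factorial.fact k)) -> Rabs (emb d) <= 2 * (/ 2) ^ K.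
Proof.
move=> hzero /small_controlled hd; apply: (proj2 (geom_bound _)) => j.
case: (Nat.le_gt_cases (pi j) K) => hpj.
  rewrite /emb_term hzero // mul0r /QtoR rmorph0 Rabs_R0.
  by apply: Rmult_le_pos; apply: pow_le; lra.
apply: (Rle_trans _ _ _ (emb_term_geom j hd)).
have -> : INR 1 * (/ 4) ^ j = (/ 2) ^ j * (/ 2) ^ j.
  by rewrite -Rpow_mult_distr /= Rmult_1_l -Rinv_mult; do 2 f_equal; lra.
have := pow_le (/ 2) j ltac:(lra); have := pi_le j => hj.
have := @inv_pow_le 2 K j ltac:(lra) ltac:(lia); nra.
Qed.

(* The embedding is continuous: ell^1-close sequences have images within
   2 (1/2)^K of each other. *)
Lemma emb_continuous p : in_ell1 N p -> forall eps : R, 0 < eps ->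
  exists delta : R, 0 < delta /\ forall q, in_ell1 N q ->
    ell1_norm N (Defs.seq_sub q p) < delta -> Rabs (emb q - emb p) < eps.
Proof.
move=> hp eps heps.
have [K hK] := pow_lt_1_zero (/ 2) ltac:(rewrite Rabs_pos_eq; lra) (eps / 2) ltac:(lra).
have := hK K (le_n K); rewrite Rabs_pos_eq; last by apply: pow_le; lra.
have [delta [hdelta hshape]] := ell1_small_shape K.
move=> hKeps; exists delta; split => // q hq hn.
have [hzero hball] := hshape _ (ell1_sub HN hq hp) hn.
by rewrite -emb_sub //; have := emb_small hzero hball; lra.
Qed.

End ProperNorm.

Theorem mainTheorem15 (N : rat -> R) (HN : proper_norm N) :
  ell1_embeds_in_R N /\ ~ R_embeds_in_ell1 N.
Proof.
split; last exact: not_R_embeds.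
exists (emb HN); split; [|split; [|split]].
- exact: emb_add.
- by move=> r q _; apply: emb_scale.
- move=> p q hp hq he.
  have hd := ell1_sub (proj1 HN) hp hq.
  have h0 : emb HN (Defs.seq_sub p q) = 0 by rewrite emb_sub // he; lra.
  by apply: functional_extensionality => k; apply: qsub_eq0; exact: (emb_kernel hd h0 k).
- exact: emb_continuous.
Qed.
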